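(* Let $\alpha_1,\dots,\alpha_m\in B_k$ and let $I=\langle\alpha_1,\dots,\alpha_m\rangle$ be the ideal of $B_k$ they generate. Then \[ I=\left\langle\sum_{A\subseteq\{1,\dots,m\},\,A\neq\emptyset}(-1)^{|A|+1}\Big(\prod_{j\in A}\alpha_j\Big)^{p^r-1}\right\rangle . \] In particular, every ideal of $B_k$ is principal.
   Context: Let $p$ be a prime, $r\ge 1$ an integer, and $\mathbb{F}_{p^r}$ the finite field with $p^r$ elements. For an integer $k\ge 1$, $B_k$ denotes the commutative ring $B_k=\mathbb{F}_{p^r}[v_1,\dots,v_k]/\langle v_i^2-v_i,\ v_iv_j-v_jv_i : 1\le i,j\le k\rangle$. *)

From HB Require Import structures.
From mathcomp Require Import all_boot all_order all_algebra all_field.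
From mathcomp Require Import ring_quotient generic_quotient.
From mathcomp Require Import mpoly.
From Stdlib Require Import ClassicalEpsilon.

Set Implicit Arguments.
Unset Strict Implicit.
Unset Printing Implicit Defensive.

Import GRing.Theory.
Local Open Scope ring_scope.

Definition gen_ideal (R : comNzRingType) (n : nat) (a : 'I_n -> R) (x : R) : Prop :=
  exists c : 'I_n -> R, x = \sum_(i < n) c i * a i.

Definition is_ideal (R : comNzRingType) (S : R -> Prop) : Prop :=
  [/\ S 0, (forall x y, S x -> S y -> S (x + y)) & (forall a x, S x -> S (a * x))].

Definition principal_ideal (R : comNzRingType) (S : R -> Prop) : Prop :=
  exists g : R, forall x, S x <-> gen_ideal (fun _ : 'I_1 => g) x.

(* Boolean version (via classical choice) of a Prop, needed because
   MathComp's ring quotients require a decidable ideal predicate. *)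
Definition classical_bool (P : Prop) : bool :=
  if excluded_middle_informative P then true else false.

Lemma classical_boolP (P : Prop) : reflect P (classical_bool P).
Proof.
rewrite /classical_bool; case: excluded_middle_informative => H; by constructor.
Qed.

Section BooleanIdeal.
Variables (F : fieldType) (k : nat).

Definition Bgens (i : 'I_k) : {mpoly F[k]} := 'X_i ^+ 2 - 'X_i.

Definition Bideal : pred {mpoly F[k]} :=
  fun q => classical_bool (gen_ideal Bgens q).

Lemma Bideal_closed : idealr_closed Bideal.
Proof.
split.
- apply/classical_boolP; exists (fun _ => 0).
  by rewrite big1 // => i _; rewrite mul0r.
- apply/negP => /classical_boolP [c Hc].
  have := congr1 (fun q : {mpoly F[k]} => q.@[fun _ : 'I_k => (0 : F)]) Hc.
  rewrite /= meval1 raddf_sum /= big1; first by move/eqP; rewrite oner_eq0.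
  move=> i _; rewrite mevalM /Bgens mevalB expr2 mevalM !mevalXU.
  by rewrite mulr0 subrr mulr0.
- move=> a u v /classical_boolP [cu ->] /classical_boolP [cv ->].
  apply/classical_boolP; exists (fun i => a * cu i + cv i).
  rewrite mulr_sumr -big_split /=; apply: eq_bigr => i _.
  by rewrite mulrDl mulrA.
Qed.

HB.instance Definition _ := isIdealr.Build {mpoly F[k]} Bideal Bideal_closed.

(* B_k = F[v_1, ..., v_k] / < v_i^2 - v_i, v_i v_j - v_j v_i >.
   (The commutation relations hold automatically in the commutative
   polynomial ring.) *)
Definition Bk : comNzRingType := {ideal_quot (Idealr.clone _ Bideal _)}.

End BooleanIdeal.

Definition prop26_gen (R : comNzRingType) (q m : nat) (alpha : 'I_m -> R) : R :=
  \sum_(A : {set 'I_m} | A != set0)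
     (-1) ^+ (#|A| + 1) * (\prod_(j in A) alpha j) ^+ (q - 1).

(* In B_k every element x satisfies x^q = x, where q = p^r: this holds for
   constants (Fermat in F_q) and for the idempotent variables v_i, and
   x |-> x^q is additive in characteristic p.  Hence e_a = a^(q-1) is an
   idempotent with a e_a = a, so a_1, ..., a_m and
   1 - prod_j (1 - e_(a_j)) generate the same ideal; expanding the product
   gives the inclusion-exclusion sum of the statement.  Since B_k is finite
   (it is spanned by the square-free monomials), every ideal is finitely
   generated, hence principal. *)
From HB Require Import structures.
From mathcomp Require Import all_boot all_order all_algebra all_field.
From mathcomp Require Import ring_quotient generic_quotient.
From mathcomp Require Import mpoly.

Set Implicit Arguments.
Unset Strict Implicit.
Unset Printing Implicit Defensive.

Import GRing.Theory.
Local Open Scope ring_scope.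
Local Open Scope quotient_scope.

Section GenIdeal.
Variables (R : comNzRingType) (n : nat) (a : 'I_n -> R).

Lemma gen_ideal_is_ideal : is_ideal (gen_ideal a).
Proof.
split.
- by exists (fun _ => 0); rewrite big1 // => i _; rewrite mul0r.
- move=> _ _ [cx ->] [cy ->]; exists (fun i => cx i + cy i).
  by rewrite -big_split /=; apply: eq_bigr => i _; rewrite mulrDl.
- move=> b _ [cx ->]; exists (fun i => b * cx i).
  by rewrite mulr_sumr; apply: eq_bigr => i _; rewrite mulrA.
Qed.

Lemma gen_ideal_gen i : gen_ideal a (a i).
Proof.
exists (fun j => if j == i then 1 else 0).
rewrite (bigD1 i) //= eqxx mul1r big1 ?addr0 // => j /negbTE ->.
by rewrite mul0r.
Qed.

Lemma gen_ideal_min (S : R -> Prop) :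
  is_ideal S -> (forall i, S (a i)) -> forall x, gen_ideal a x -> S x.
Proof.
move=> [S0 SD SM] Sa _ [c ->].
by apply: (big_ind S) => // i _; apply: SM.
Qed.

End GenIdeal.

Lemma expr_idem (R : nzSemiRingType) (y : R) n : y * y = y -> y ^+ n.+1 = y.
Proof. by move=> yy; elim: n => // n IH; rewrite exprS IH. Qed.

Lemma prop26_genE (R : comNzRingType) q m (alpha : 'I_m -> R) :
  prop26_gen q alpha = 1 - \prod_(j < m) (1 - alpha j ^+ (q - 1)).
Proof.
under [in RHS]eq_bigr do rewrite addrC.
rewrite bigA_distr (bigD1 set0) //= big1 => [|i]; last by rewrite inE.
rewrite opprD addrA subrr add0r -sumrN; apply: eq_bigr => A _.
by rewrite -big_mkcond /= prodrN prodrXl exprD expr1 mulrN1 mulNr.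
Qed.

Lemma ideal_finite_gen (R : comNzRingType) (T : finType) (phi : T -> R)
    (phi_surj : forall x, exists t, x = phi t) (S : R -> Prop) :
  is_ideal S -> exists n (a : 'I_n -> R), forall x, S x <-> gen_ideal a x.
Proof.
move=> S_ideal.
pose s := [seq phi t | t <- enum T & classical_bool (S (phi t))].
have s_S y : y \in s = classical_bool (S y).
  apply/mapP/idP => [[t] | Sy]; first by rewrite mem_filter => /andP[St _] ->.
  have [t yt] := phi_surj y; exists t => //.
  by rewrite mem_filter mem_enum andbT -yt.
exists (size s), (fun i => s`_i) => x; split => [Sx | ].
- have xs : x \in s by rewrite s_S; apply/classical_boolP.
  have := gen_ideal_gen (fun i => s`_i) (Ordinal (etrans (index_mem x s) xs)).
  by rewrite /= nth_index.
- apply: gen_ideal_min => // i; apply/classical_boolP; rewrite -s_S.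
  exact: mem_nth.
Qed.

Section FrobeniusFixedRing.
Variables (R : comNzRingType) (q : nat).
Hypotheses (q_gt1 : (1 < q)%N) (frobR : forall x : R, x ^+ q = x).

Lemma mul_expr_subn1 (a : R) : a * a ^+ (q - 1) = a.
Proof. by rewrite -exprS subn1 prednK ?frobR // ltnW. Qed.

Lemma mul_prop26_gen m (alpha : 'I_m -> R) j :
  alpha j * prop26_gen q alpha = alpha j.
Proof.
rewrite prop26_genE mulrBr mulr1 (bigD1 j) //= mulrA mulrBr mulr1.
by rewrite mul_expr_subn1 subrr mul0r subr0.
Qed.

Lemma prop26_gen_in_ideal m (alpha : 'I_m -> R) :
  gen_ideal alpha (prop26_gen q alpha).
Proof.
have [ideal_0 ideal_D ideal_M] := gen_ideal_is_ideal alpha.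
apply: big_ind => // A /set0Pn [j jA]; apply: (ideal_M).
rewrite (bigD1 j) //= exprMn mulrC -(subnSK q_gt1) [alpha j ^+ _]exprSr mulrA.
by apply: ideal_M; apply: gen_ideal_gen.
Qed.

Lemma gen_ideal_prop26 m (alpha : 'I_m -> R) x :
  gen_ideal alpha x <-> gen_ideal (fun _ : 'I_1 => prop26_gen q alpha) x.
Proof.
have [_ _ g_M] := gen_ideal_is_ideal (fun _ : 'I_1 => prop26_gen q alpha).
split; apply: gen_ideal_min; try exact: gen_ideal_is_ideal.
- by move=> i; rewrite -mul_prop26_gen; apply: g_M; apply: (gen_ideal_gen _ ord0).
- by move=> _; apply: prop26_gen_in_ideal.
Qed.

Lemma ideal_principal_of_finite (T : finType) (phi : T -> R)
    (phi_surj : forall x, exists t, x = phi t) (S : R -> Prop) :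
  is_ideal S -> principal_ideal S.
Proof.
move=> S_ideal.
have [n [a Sa]] := ideal_finite_gen phi_surj S_ideal.
by exists (prop26_gen q a) => x; rewrite Sa gen_ideal_prop26.
Qed.

End FrobeniusFixedRing.

Section BooleanQuotient.
Variables (F : finFieldType) (k : nat).
Local Notation BQ := {ideal_quot (Idealr.clone _ (@Bideal F k) _)}.
Local Notation pi := (\pi_BQ : {mpoly F[k]} -> BQ).

Lemma BQ_ind (P : BQ -> Prop) :
  P 0 -> (forall x y, P x -> P y -> P (x + y)) ->
  (forall c m, P (pi (c *: 'X_[m]))) -> forall x, P x.
Proof.
move=> P0 PD Pmono x; rewrite -[x]reprK.
elim/mpolyind: (repr x) => [|c m p _ _ IH]; first by rewrite rmorph0.
by rewrite rmorphD; apply: PD; first exact: Pmono.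
Qed.

Lemma piX_idem (i : 'I_k) : pi 'X_i * pi 'X_i = pi 'X_i.
Proof.
rewrite -rmorphM; apply/eqP; rewrite -Quotient.idealrBE -expr2.
by apply/classical_boolP; apply: (gen_ideal_gen (@Bgens F k)).
Qed.

Lemma pi_monomial c m :
  pi (c *: 'X_[m]) = pi c%:MP * \prod_(i < k | m i != 0%N) pi 'X_i.
Proof.
rewrite -mul_mpolyC rmorphM mpolyXE_id rmorph_prod.
rewrite [\prod_(i < k | _) _]big_mkcond; congr (_ * _).
apply: eq_bigr => i _; rewrite rmorphXn; case: (m i) => [|n]; first exact: expr0.
by apply: expr_idem; apply: piX_idem.
Qed.

Lemma BQ_frobenius p r :
  prime p -> #|F| = (p ^ r)%N -> forall x : BQ, x ^+ #|F| = x.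
Proof.
move=> p_pr F_card.
have pcharB : p \in [pchar BQ].
  by move: (card_finPcharP F_card p_pr) => /(rmorph_pchar (@mpolyC k F))/(rmorph_pchar pi).
have q_pnat : [pchar BQ].-nat #|F| by rewrite F_card pnatX (pnatE _ p_pr) pcharB.
have q_gt0 : (0 < #|F|)%N by rewrite ltnW // finNzRing_gt1.
apply: BQ_ind => [|x y Fx Fy|c m]; first by rewrite expr0n eqn0Ngt q_gt0.
  by rewrite exprDn_pchar // Fx Fy.
rewrite pi_monomial exprMn -!rmorphXn expf_card -prodrXl; congr (_ * _).
by apply: eq_bigr => i _; rewrite -(prednK q_gt0) expr_idem // piX_idem.
Qed.

Definition multilinear (f : {ffun {set 'I_k} -> F}) : BQ :=
  \sum_(A : {set 'I_k}) pi (f A)%:MP * \prod_(i in A) pi 'X_i.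

Lemma multilinear_surj (x : BQ) : exists f, x = multilinear f.
Proof.
elim/BQ_ind: x => [|x y [f1 ->] [f2 ->]|c m].
- exists [ffun _ => 0]; rewrite /multilinear big1 // => A _.
  by rewrite ffunE !rmorph0 mul0r.
- exists [ffun A => f1 A + f2 A]; rewrite /multilinear -big_split /=.
  by apply: eq_bigr => A _; rewrite ffunE !rmorphD mulrDl.
pose supp := [set i | m i != 0%N].
exists [ffun A => if A == supp then c else 0].
rewrite /multilinear (bigD1 supp) //= ffunE eqxx [X in _ + X]big1 ?addr0.
  by rewrite pi_monomial; congr (_ * _); apply: eq_bigl => i; rewrite inE.
by move=> A /negbTE nA; rewrite ffunE nA !rmorph0 mul0r.
Qed.

End BooleanQuotient.

Theorem proposition2p6 (F : finFieldType) (p r k : nat)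
    (hp : prime p) (hr : (1 <= r)%N) (hF : #|F| = (p ^ r)%N) (hk : (1 <= k)%N) :
  (forall (m : nat) (alpha : 'I_m -> Bk F k), (1 <= m)%N ->
     forall x : Bk F k,
       gen_ideal alpha x <->
       gen_ideal (fun _ : 'I_1 => prop26_gen (p ^ r) alpha) x)
  /\ (forall S : Bk F k -> Prop, is_ideal S -> principal_ideal S).
Proof.
have q_gt1 : (1 < p ^ r)%N by rewrite -hF finNzRing_gt1.
have frobB (x : Bk F k) : x ^+ (p ^ r) = x by rewrite -hF (BQ_frobenius hp hF).
split=> [m alpha _ x|]; first exact: gen_ideal_prop26.
move=> S; apply: (ideal_principal_of_finite q_gt1 frobB); exact: multilinear_surj.
Qed.
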